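(* Let $k\ge1$ and $n\ge 2k+1$. If the Kneser graph $K(n,k)$ admits a Hamilton cycle, then the bipartite Kneser graph $H(n,k)$ admits a Hamilton cycle or a Hamilton path.
   Context: $K(n,k)$ has as vertices all $k$-element subsets of $[n]$, two sets adjacent iff disjoint. The bipartite Kneser graph $H(n,k)$ has as vertices all $k$-element and all $(n-k)$-element subsets of $[n]$, with an edge between $A$ and $B$ if and only if $A\subseteq B$. *)

From mathcomp Require Import all_boot.
Set Implicit Arguments. Unset Strict Implicit. Unset Printing Implicit Defensive.

(* A graph is given by a vertex set V : {set T} over a finType T and an
   adjacency relation e : rel T (only its restriction to V matters). *)

Definition ham_path (T : finType) (V : {set T}) (e : rel T) : Prop :=
  exists (x : T) (p : seq T),
    [/\ uniq (x :: p), V =i (x :: p) & path e x p].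

Definition ham_cycle (T : finType) (V : {set T}) (e : rel T) : Prop :=
  exists (x : T) (p : seq T),
    [/\ uniq (x :: p), V =i (x :: p), 2 < size (x :: p)
      & path e x (rcons p x)].

Definition kneser_V (n k : nat) : {set {set 'I_n}} := [set A : {set 'I_n} | #|A| == k].
Definition kneser_E (n : nat) : rel {set 'I_n} := fun A B => [disjoint A & B].

Definition bkneser_V (n k : nat) : {set {set 'I_n}} :=
  [set A : {set 'I_n} | (#|A| == k) || (#|A| == n - k)].
Definition bkneser_E (n k : nat) : rel {set 'I_n} := fun A B =>
  [|| [&& #|A| == k, #|B| == n - k & A \subset B]
    | [&& #|B| == k, #|A| == n - k & B \subset A]].

From mathcomp Require Import all_boot zify.
Set Implicit Arguments. Unset Strict Implicit. Unset Printing Implicit Defensive.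

(* Let S_0, ..., S_(N-1) be a Hamilton cycle of K(n,k). Disjointness of S_j
   and S_(j+1) means S_j is contained in the complement of S_(j+1), so
   S_0, ~S_1, S_2, ~S_3, ... is a walk in H(n,k). If N is odd, going twice
   around the cycle meets every vertex of H(n,k) exactly once and closes up.
   If N is even, use that K(n,k) is not bipartite: the arcs of length k in
   Z_(2k+1) form an odd cycle, so two disjoint sets S_a, S_b sit at positions
   of the same parity. Walking once around from ~S_(a+1) to S_a, jumping to
   ~S_b and walking once around again is then a Hamilton path. *)

Lemma cons_mkseq (T : Type) (g : nat -> T) r :
  g 0 :: mkseq (g \o succn) r = mkseq g r.+1.
Proof. by rewrite /mkseq /= (iotaDl 1 0 r) -map_comp. Qed.

Lemma path_mkseq (T : Type) (e : rel T) (g : nat -> T) r :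
  (forall i, i < r -> e (g i) (g i.+1)) -> path e (g 0) (mkseq (g \o succn) r).
Proof.
move=> ge; apply/(pathP (g 0)) => i; rewrite size_mkseq => ir.
by rewrite cons_mkseq !nth_mkseq ?ge // ltnW.
Qed.

Lemma cycle_nth_mod (T : Type) (e : rel T) x0 (x : T) (p : seq T) j
    (s := x :: p) :
  path e x (rcons p x) -> e (nth x0 s (j %% size s)) (nth x0 s (j.+1 %% size s)).
Proof.
move=> /(pathP x0) s_path; rewrite -addn1 -modnDml addn1.
have : j %% size s < size s by rewrite ltn_pmod.
move: (j %% size s) => i; rewrite ltnS => ip.
have := s_path i; rewrite size_rcons ltnS -rcons_cons !nth_rcons /= => /(_ ip).
rewrite ltnS ip /s; case: ltngtP ip => // [ip|->] _; first by rewrite modn_small.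
by rewrite modnn.
Qed.

Lemma odd_loop_eq_step (c : nat -> bool) m :
  odd m -> c m = c 0 -> exists2 t, t < m & c t.+1 = c t.
Proof.
move=> odd_m cm0.
have [/existsP[t /eqP ct] | /existsPn alt] :=
  boolP [exists t : 'I_m, c t.+1 == c t].
  by exists t.
have ct t : t <= m -> c t = c 0 (+) odd t.
  elim: t => [|t IHt] tm; first by rewrite addbF.
  have := alt (Ordinal tm); rewrite /= IHt ?(ltnW tm) // addbN.
  by case: (c t.+1); case: (_ (+) _).
by move: (ct m (leqnn m)); rewrite cm0 odd_m addbT; case: (c 0).
Qed.

Lemma odd_eq_mod_even d i j : ~~ odd d -> i = j %[mod d] -> odd i = odd j.
Proof. by move=> /negbTE even_d ij; rewrite -(odd_mod i even_d) ij odd_mod. Qed.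

Section HamiltonFromSequence.

Variables (T : finType) (V : {set T}) (e : rel T) (f : nat -> T) (m : nat).
Hypotheses (f_inj : {in gtn m &, injective f})
  (f_in : {in gtn m, forall i, f i \in V}) (card_V : #|V| = m).

Lemma uniq_mkseq_eqi : uniq (mkseq f m) /\ V =i mkseq f m.
Proof.
have uf : uniq (mkseq f m) by apply/mkseq_uniqP.
have sfV : mkseq f m \subset V.
  by apply/subsetP => x /mapP[i]; rewrite mem_iota add0n => /f_in fV ->.
have cfV : #|mkseq f m| = #|V| by rewrite (card_uniqP uf) size_mkseq.
by split=> // x; rewrite (subset_cardP cfV sfV).
Qed.

Lemma ham_path_mkseq :
  0 < m -> (forall i, i.+1 < m -> e (f i) (f i.+1)) -> ham_path V e.
Proof.
case: m f_inj f_in card_V uniq_mkseq_eqi => // r _ _ _ [uf Vf] _ fe.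
exists (f 0), (mkseq (f \o succn) r); rewrite cons_mkseq; split=> //.
exact: path_mkseq.
Qed.

Lemma ham_cycle_mkseq : 2 < m -> f m = f 0 ->
  (forall i, i < m -> e (f i) (f i.+1)) -> ham_cycle V e.
Proof.
case: m f_inj f_in card_V uniq_mkseq_eqi => // r _ _ _ [uf Vf] r2 fm fe.
exists (f 0), (mkseq (f \o succn) r); rewrite cons_mkseq size_mkseq.
split=> //; rewrite -[in rcons _ _]fm -[f r.+1]/((f \o succn) r) -mkseqS.
exact: path_mkseq.
Qed.

End HamiltonFromSequence.

Section KneserOddCycle.

Variables (n M k : nat) (M_le_n : M.+1 <= n).

Definition arc (j : nat) : {set 'I_n} :=
  [set widen_ord M_le_n (Ordinal (ltn_pmod (j + i) (ltn0Sn M))) | i : 'I_k].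

Lemma card_arc j : k <= M -> #|arc j| = k.
Proof.
move=> kM; rewrite card_imset ?card_ord // => i i' /(congr1 val) /= /eqP.
have ltM (i0 : 'I_k) : i0 < M.+1 by have := ltn_ord i0; lia.
by rewrite eqn_modDl !modn_small ?ltM // => /eqP/val_inj.
Qed.

Lemma arc_mod j j' : j = j' %[mod M.+1] -> arc j = arc j'.
Proof.
move=> jj'; apply: eq_imset => i; apply: val_inj.
by rewrite /= -modnDml jj' modnDml.
Qed.

Lemma disjoint_arc j : 2 * k <= M.+1 -> [disjoint arc j & arc (j + k)].
Proof.
move=> kM; rewrite -setI_eq0; apply/eqP/setP => x; rewrite !inE.
apply/negP => /andP[/imsetP[i _ ->] /imsetP[i' _ /(congr1 val) /= /esym/eqP]].
rewrite -addnA eqn_modDl eqn_mod_dvd; last by have := ltn_ord i; lia.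
by rewrite gtnNdvd //; have := ltn_ord i; have := ltn_ord i'; lia.
Qed.

End KneserOddCycle.

Lemma kneser_same_parity_edge n k (s : seq {set 'I_n}) :
  2 * k < n -> kneser_V n k =i s ->
  exists a b, [/\ a < size s, b < size s, odd a = odd b
                & [disjoint nth set0 s a & nth set0 s b]].
Proof.
move=> k_lt_n Vs; pose A t := arc k k_lt_n (t * k).
have As t : A t \in s by rewrite -Vs inE card_arc //; lia.
have A_loop : A (2 * k).+1 = A 0.
  by apply: arc_mod; rewrite mul0n mod0n modnMr.
have odd_len : odd (2 * k).+1 by rewrite /= mul2n odd_double.
pose parity B := odd (index B s).
have [t _ /= same_parity] :=
  @odd_loop_eq_step (parity \o A) _ odd_len (congr1 parity A_loop).
exists (index (A t) s), (index (A t.+1) s).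
rewrite !index_mem !nth_index ?As //; split=> //.
by rewrite /A [t.+1 * k]mulSn addnC disjoint_arc.
Qed.

Lemma card_bkneser_V n k : 2 * k < n -> #|bkneser_V n k| = 2 * 'C(n, k).
Proof.
move=> k_lt_n.
have -> : bkneser_V n k = kneser_V n k :|: kneser_V n (n - k).
  by apply/setP => A; rewrite !inE.
rewrite cardsU (_ : _ :&: _ = set0) ?cards0 ?subn0.
  by rewrite !card_draws card_ord bin_sub; lia.
apply/setP => A; rewrite !inE; apply/negP => /andP[/eqP h1 /eqP h2]; lia.
Qed.

Section BipartiteLift.

Variables (n k N : nat) (S : nat -> {set 'I_n}).
Hypotheses (k_lt_n : 2 * k < n) (N_gt1 : 1 < N) (N_binom : N = 'C(n, k)).
Hypotheses (S_card : forall j, #|S j| = k)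
  (S_disj : forall j, [disjoint S j & S j.+1])
  (S_periodic : forall j, S (j + N) = S j)
  (S_inj : forall i j, S i = S j -> i = j %[mod N]).

Definition lift j (b : bool) := if b then ~: S j else S j.

Definition lift_walk j0 b0 i := lift (j0 + i) (b0 (+) odd i).

Lemma card_lift j b : #|lift j b| = if b then n - k else k.
Proof.
have := cardsC (S j); rewrite card_ord S_card.
by case: b => //=; lia.
Qed.

Lemma lift_in_bkneser_V j b : lift j b \in bkneser_V n k.
Proof. by rewrite inE card_lift; case: b; rewrite eqxx ?orbT. Qed.

Lemma lift_edge_disjoint i j :
  [disjoint S i & S j] -> bkneser_E k (lift i false) (lift j true).
Proof.
by rewrite /bkneser_E !card_lift /= !eqxx /= subsets_disjoint setCK => ->.
Qed.

Lemma lift_edge j b : bkneser_E k (lift j b) (lift j.+1 (~~ b)).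
Proof.
case: b; last exact: lift_edge_disjoint.
have := @lift_edge_disjoint j.+1 j; rewrite disjoint_sym => /(_ (S_disj j)).
by rewrite /bkneser_E orbC.
Qed.

Lemma lift_inj i j b c : lift i b = lift j c -> b = c /\ i = j %[mod N].
Proof.
move=> eq_lift; have bc : b = c.
  have := card_lift j c; rewrite -eq_lift card_lift.
  by case: b c {eq_lift} => -[] //; lia.
split=> //; apply: S_inj; move: eq_lift; rewrite /lift bc.
by case: c {bc} => // /setC_inj.
Qed.

Lemma lift_walk_edge j0 b0 i :
  bkneser_E k (lift_walk j0 b0 i) (lift_walk j0 b0 i.+1).
Proof. by rewrite /lift_walk addnS /= addbN lift_edge. Qed.

Lemma lift_walk_inj j0 b0 i i' : lift_walk j0 b0 i = lift_walk j0 b0 i' ->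
  odd i = odd i' /\ i = i' %[mod N].
Proof.
by case/lift_inj => /addbI odd_ii' /eqP; rewrite eqn_modDl => /eqP.
Qed.

Lemma bkneser_ham_cycle : odd N -> ham_cycle (bkneser_V n k) (bkneser_E k).
Proof.
move=> odd_N; apply: (@ham_cycle_mkseq _ _ _ (lift_walk 0 false) (2 * N)).
- move=> i i' /= ilt i'lt /lift_walk_inj[odd_ii' ii'].
  have : i == i' %[mod N * 2].
    by rewrite chinese_remainder ?coprimen2 // ii' !modn2 odd_ii' !eqxx.
  by rewrite !modn_small ?(mulnC N) // => /eqP.
- by move=> i _; apply: lift_in_bkneser_V.
- by rewrite card_bkneser_V // N_binom.
- by lia.
- by rewrite /lift_walk /lift /= mul2n odd_double -addnn addnA !S_periodic.
- by move=> i _; apply: lift_walk_edge.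
Qed.

Lemma bkneser_ham_path a b : ~~ odd N -> odd a = odd b -> [disjoint S a & S b] ->
  ham_path (bkneser_V n k) (bkneser_E k).
Proof.
move=> even_N odd_ab dis_ab.
pose f i := if i < N then lift_walk a.+1 true i else lift_walk b true i.
have halves_apart i i' : lift_walk a.+1 true i != lift_walk b true i'.
  apply/eqP => /lift_inj[/addbI odd_ii' /(odd_eq_mod_even even_N)].
  by rewrite !oddD /= odd_ab odd_ii'; case: (odd b); case: (odd i').
apply: (@ham_path_mkseq _ _ _ f (2 * N)).
- move=> i i' /= ilt i'lt; rewrite /f.
  case: (ltnP i N) => iN; case: (ltnP i' N) => i'N.
  + by case/lift_walk_inj=> _ /eqP; rewrite !modn_small // => /eqP.
  + by move/eqP; rewrite (negbTE (halves_apart _ _)).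
  + by move/esym/eqP; rewrite (negbTE (halves_apart _ _)).
  + case/lift_walk_inj=> _ /eqP; rewrite -(subnK iN) -(subnK i'N) !modnDr.
    by rewrite !modn_small ?ltn_subLR ?addnn -?mul2n // => /eqP ->.
- by move=> i _; rewrite /f; case: ifP => _; apply: lift_in_bkneser_V.
- by rewrite card_bkneser_V // N_binom.
- by lia.
move=> i ilt; rewrite /f; case: (ltngtP i.+1 N) => iN; try exact: lift_walk_edge.
have odd_i : odd i by move: even_N; rewrite -iN /=; case: (odd i).
rewrite /lift_walk /= odd_i addSnnS iN /lift !S_periodic.
exact: lift_edge_disjoint.
Qed.

End BipartiteLift.

Theorem mainTheorem4 (n k : nat) :
  1 <= k -> 2 * k + 1 <= n ->
  ham_cycle (@kneser_V n k) (@kneser_E n) ->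
  ham_cycle (@bkneser_V n k) (@bkneser_E n k) \/ ham_path (@bkneser_V n k) (@bkneser_E n k).
Proof.
move=> _ k_lt_n [x [p [uniq_s Vs N_gt2 s_cycle]]]; rewrite addn1 in k_lt_n.
set s := x :: p in uniq_s Vs N_gt2; set N := size s in N_gt2.
pose S j := nth set0 s (j %% N).
have S_in j : S j \in s by rewrite mem_nth // ltn_pmod.
have N_gt1 : 1 < N := ltnW N_gt2.
have N_binom : N = 'C(n, k).
  by rewrite /N -(card_uniqP uniq_s) -(eq_card Vs) card_draws card_ord.
have S_card j : #|S j| = k by have := S_in j; rewrite -Vs inE => /eqP.
have S_disj j : [disjoint S j & S j.+1] := cycle_nth_mod set0 j s_cycle.
have S_periodic j : S (j + N) = S j by rewrite /S modnDr.
have S_inj i j : S i = S j -> i = j %[mod N].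
  by move/eqP; rewrite /S nth_uniq ?ltn_pmod // => /eqP.
have [odd_N | even_N] := boolP (odd N).
  left; exact: (bkneser_ham_cycle k_lt_n N_gt1 N_binom S_card S_disj
                                  S_periodic S_inj).
right; have [a [b [a_lt b_lt odd_ab dis_ab]]] := kneser_same_parity_edge k_lt_n Vs.
apply: (bkneser_ham_path k_lt_n N_gt1 N_binom S_card S_disj S_periodic S_inj
          even_N odd_ab).
by rewrite /S !modn_small.
Qed.
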